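(* Let $s\in[\tfrac12,1)$, $m\ge1$, and let $\alpha_s,\beta_s>0$ be constants depending only on $s$. Define $\Xi_s$ on $\{(q_1,\dots,q_m)\}$ by \[ \Xi_s=\sum_{i=1}^m\Big(\alpha_sU(2q_i)+\beta_s\varepsilon^{2s-1}|2q_i|^{2s-1}\Big)+\sum_{i\neq j}\Big(\alpha_sU(q_i-q_j)+\beta_s\varepsilon^{2s-1}|q_i-q_j|^{2s-1}\Big)+\sum_{i\neq j}\Big(\alpha_sU(q_i+q_j)+\beta_s\varepsilon^{2s-1}|q_i+q_j|^{2s-1}\Big) \] for $s\in(\frac12,1)$, and \[ \Xi_{\frac12}=\sum_{i=1}^m\Big(\alpha_{\frac12}U(2q_i)+\tfrac{\beta_{\frac12}}{\log\frac1\varepsilon}\log|2q_i|\Big)+\sum_{i\neq j}\Big(\alpha_{\frac12}U(q_i-q_j)+\tfrac{\beta_{\frac12}}{\log\frac1\varepsilon}\log|q_i-q_j|\Big)+\sum_{i\neq j}\Big(\alpha_{\frac12}U(q_i+q_j)+\tfrac{\beta_{\frac12}}{\log\frac1\varepsilon}\log|q_i+q_j|\Big) \] for $s=\frac12$ (sums over ordered pairs $i\ne j$). Then, provided $\eta>0$ is sufficiently small (and $\varepsilon>0$ is sufficiently small), $\Xi_s$ admits a global minimum point over $\overline{Q_{s,\eta}}$ lying in the interior of $Q_{s,\eta}$.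
   Context: $U$ is the unique positive even solution of $(-\Delta)^sU+U-U^2=0$ in $\mathbb{R}$ vanishing at infinity ($(-\Delta)^s$ the fractional Laplacian with Fourier symbol $|\xi|^{2s}$); it satisfies $U(x)=\mathfrak b_s|x|^{-1-2s}(1+o(1))$ as $|x|\to\infty$ for some $\mathfrak b_s>0$. For $\eta>0$, $Q_{s,\eta}$ is the set of $(q_1,\dots,q_m)$ with $\frac1\eta\ell_\varepsilon>q_i>\eta\ell_\varepsilon$ for all $i$ and $|q_i-q_j|>\eta\ell_\varepsilon$ for $i\ne j$, where $\ell_\varepsilon=\varepsilon^{\frac{1-2s}{4s}}$ if $s\in(\frac12,1)$ and $\ell_\varepsilon=(\log\frac1\varepsilon)^{1/2}$ if $s=\frac12$. *)

From HB Require Import structures.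
From mathcomp Require Import all_boot all_order all_algebra.
From mathcomp Require Import all_classical all_reals all_analysis.
Set Implicit Arguments. Unset Strict Implicit. Unset Printing Implicit Defensive.
Import Order.TTheory GRing.Theory Num.Theory.
Import numFieldNormedType.Exports.
Local Open Scope classical_set_scope.
Local Open Scope ring_scope.

Section Defs.
Variable R : realType.

(* Properties of the ground state U used in the paper: U is continuous,
   even, positive and U(x) = b |x|^{-1-2s} (1 + o(1)) as |x| -> oo,
   i.e. U(x) |x|^{1+2s} -> b (as x -> +oo; the case x -> -oo follows from evenness). *)
Definition ground_state_props (s : R) (U : R -> R) (b : R) : Prop :=
  [/\ continuous U,
      (forall x, U (- x) = U x),
      (forall x, 0 < U x),
      0 < b &
      (fun x => U x * `|x| `^ (1 + 2 * s)) @ +oo --> b].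

Definition ell (s eps : R) : R :=
  if s == 2^-1 then Num.sqrt (ln eps^-1)
  else eps `^ ((1 - 2 * s) / (4 * s)).

Definition Qset (m : nat) (s eta eps : R) : set 'rV[R]_m :=
  [set q | (forall i, eta * ell s eps < q ord0 i < eta^-1 * ell s eps) /\
           (forall i j, i != j -> eta * ell s eps < `|q ord0 i - q ord0 j|)].

Definition phi (s beta eps x : R) : R :=
  if s == 2^-1 then beta / ln eps^-1 * ln `|x|
  else beta * eps `^ (2 * s - 1) * `|x| `^ (2 * s - 1).

Definition Xi (m : nat) (s alpha beta : R) (U : R -> R) (eps : R)
    (q : 'rV[R]_m) : R :=
  \sum_(i < m) (alpha * U (2 * q ord0 i) + phi s beta eps (2 * q ord0 i))
  + \sum_(i < m) \sum_(j < m | j != i)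
      (alpha * U (q ord0 i - q ord0 j) + phi s beta eps (q ord0 i - q ord0 j))
  + \sum_(i < m) \sum_(j < m | j != i)
      (alpha * U (q ord0 i + q ord0 j) + phi s beta eps (q ord0 i + q ord0 j)).

End Defs.

From HB Require Import structures.
From mathcomp Require Import all_boot all_order all_algebra.
From mathcomp Require Import all_classical all_reals all_analysis.
From mathcomp Require Import lra ring.
Import Order.TTheory GRing.Theory Num.Theory.
Import numFieldNormedType.Exports.
Local Open Scope classical_set_scope.
Local Open Scope ring_scope.
Set Implicit Arguments. Unset Strict Implicit.

(* After rescaling by the length [ell], every summand of [Xi] is [decay s ell] times a
   profile of [x / ell]: the [U]-part behaves like [alpha b (x/ell)^(-1-2s)] and blows up
   as [x/ell -> 0], while the interaction part grows like [(x/ell)^(2s-1)], resp.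
   [ln (x/ell)], as [x/ell -> oo]; both are bounded below uniformly.  Hence a configuration
   on the boundary of [Q_{s,eta}], where some [2 q_i] or [|q_i - q_j|] is at most
   [2 eta ell] or at least [ell / eta], has a summand exceeding the corresponding summand of
   the reference configuration [(ell, 2 ell, ..., m ell)] by an amount which, for [eta]
   small, beats the bounded losses on all other summands.  The minimum of the continuous
   [Xi] over the compact closure, given by the extreme value theorem, is thus interior. *)

Section ScaleFunctions.
Variable R : realType.
Implicit Types s t x L beta : R.

(* For [t > 0]: [decay s t = t^(-1-2s)], the decay rate of [U], and [growth s t] is
   [t^(2s-1)], resp. [ln t] for [s = 1/2], the profile of [phi]. *)
Definition decay s t : R := expR (- (1 + 2 * s) * ln t).

Definition growth s t : R :=
  if s == 2^-1 then ln t else expR ((2 * s - 1) * ln t).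

Definition growth_rate s : R := if s == 2^-1 then 1 else 2 * s - 1.

Definition phi_offset s beta L : R := if s == 2^-1 then beta * ln L else 0.

Lemma decay_gt0 s t : 0 < decay s t.
Proof. exact: expR_gt0. Qed.

Lemma decay_le1 s t : 0 <= s -> 1 <= t -> decay s t <= 1.
Proof.
move=> s0 t1; rewrite /decay -[leRHS]expR0 ler_expR mulNr oppr_le0.
by apply: mulr_ge0; [lra | exact: ln_ge0].
Qed.

Lemma decay_ge_invsqr s t : 2^-1 <= s -> 0 < t <= 1 -> (t ^+ 2)^-1 <= decay s t.
Proof.
move=> s_ge /andP[t0 t1]; have lnt : ln t <= 0 by exact: ln_le0.
rewrite -[leLHS]lnK ?posrE ?invr_gt0 ?exprn_gt0 // lnV ?posrE ?exprn_gt0 //.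
rewrite lnXn // /decay ler_expR mulr2n; nra.
Qed.

Lemma decay_div s x L : 0 < x -> 0 < L -> decay s x = decay s L * decay s (x / L).
Proof. by move=> x0 L0; rewrite /decay -expRD ln_div ?posrE //; congr expR; ring. Qed.

Lemma growth_rate_itv s : 2^-1 <= s < 1 -> 0 < growth_rate s <= 1.
Proof. by rewrite /growth_rate; case: eqP => [_|/eqP s_neq /andP[]]; lra. Qed.

Lemma growth_ge_ln s t : 0 < t -> growth_rate s * ln t <= growth s t.
Proof.
rewrite /growth /growth_rate; case: eqP => _ t0; first by rewrite mul1r.
by apply: le_trans (expR_ge1Dx _); rewrite lerDr.
Qed.

Lemma growth_ge_oppV s t : 2^-1 <= s < 1 -> 0 < t -> - t^-1 <= growth s t.
Proof.
move=> hs t0; apply: le_trans _ (growth_ge_ln s t0).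
have /andP[c0 c1] := growth_rate_itv hs.
have lnV_lt : ln t^-1 < t^-1 by apply: ln_sublinear; rewrite invr_gt0.
rewrite lnV ?posrE // in lnV_lt.
have [lnt0|lnt0] := leP 0 (ln t); last nra.
by apply: le_trans _ (mulr_ge0 (ltW c0) lnt0); rewrite oppr_le0 invr_ge0 ltW.
Qed.

Lemma growth_le s t : 2^-1 <= s < 1 -> 1 <= t -> growth s t <= t.
Proof.
move=> /andP[s1 s2] t1; have t0 : 0 < t by lra.
have lnt := ln_ge0 t1.
rewrite /growth; case: eqP => _; first exact/ltW/ln_sublinear.
by rewrite -[leRHS]lnK // ler_expR; nra.
Qed.

Lemma growth_continuous s t : 0 < t -> {for t, continuous (growth s)}.
Proof.
move=> t0; rewrite /growth; case: eqP => _; first exact: continuous_ln.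
apply: (@continuous_comp _ _ _ (fun t => (2 * s - 1) * ln t) expR).
  by apply: cvgM; [exact: cvg_cst | exact: continuous_ln].
exact: continuous_expR.
Qed.

Lemma decay_growth_ge s a beta t : 2^-1 <= s < 1 -> 0 < a -> 0 < beta -> 0 < t ->
  - (beta + beta ^+ 2 / (4 * a)) <= a * decay s t + beta * growth s t.
Proof.
move=> hs a0 beta0 t0.
have hg : - (beta / t) <= beta * growth s t.
  by rewrite -mulrN ler_pM2l // growth_ge_oppV.
have hk : 4 * a * (beta ^+ 2 / (4 * a)) = beta ^+ 2 by rewrite mulrC divfK ?mulf_neq0 ?gt_eqF.
have k0 : 0 <= beta ^+ 2 / (4 * a) by rewrite divr_ge0 ?sqr_ge0 // mulr_ge0 // ltW.
have [t1|t1] := leP t 1.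
  (* [a u^2 - beta u] with [u = 1/t] is a quadratic bounded below by [- beta^2 / 4a] *)
  have hd : (t ^+ 2)^-1 <= decay s t by apply: decay_ge_invsqr; [case/andP: hs | lra].
  set u := t^-1 in hg hd; have u2 : u ^+ 2 = (t ^+ 2)^-1 by rewrite exprVn.
  rewrite -u2 in hd; rewrite mulrC -/u in hg.
  have sq := sqr_ge0 (2 * a * u - beta).
  have : a * u ^+ 2 <= a * decay s t by rewrite ler_pM2l.
  nra.
have : beta / t <= beta by rewrite ler_pdivrMr // ler_peMr // ltW.
have : 0 <= a * decay s t by rewrite mulr_ge0 ?ltW ?decay_gt0.
lra.
Qed.

End ScaleFunctions.

Section LengthScale.
Variable R : realType.
Implicit Types s e x beta T : R.

Lemma ln_inv_gt0 e : 0 < e < 1 -> 0 < ln e^-1.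
Proof. by case/andP=> e0 e1; apply: ln_gt0; rewrite invf_gt1. Qed.

Lemma ell_gt0 s e : 0 < e < 1 -> 0 < ell s e.
Proof.
move=> he; rewrite /ell; case: ifP => _; first by rewrite sqrtr_gt0 ln_inv_gt0.
by case/andP: he => e0 _; rewrite powR_gt0.
Qed.

Lemma ell_gt_near0 s T : 2^-1 <= s < 1 -> 0 < T ->
  exists2 e0 : R, 0 < e0 & forall e, 0 < e < e0 -> e < 1 /\ T < ell s e.
Proof.
move=> /andP[s_ge s_lt] T0; rewrite /ell; case: eqP => [_|/eqP s_neq].
  exists (expR (- T ^+ 2)) => [|e /andP[e0 e_lt]]; first exact: expR_gt0.
  have e1 : e < 1 by rewrite (lt_le_trans e_lt) // -[leRHS]expR0 ler_expR oppr_le0 sqr_ge0.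
  split=> //; rewrite -[ltLHS](gtr0_norm T0) -sqrtr_sqr ltr_sqrt ?ln_inv_gt0 ?e0 //.
  by rewrite lnV ?posrE // ltrNr -[ltRHS]expRK ltr_ln ?posrE ?expR_gt0.
have s_gt : 2^-1 < s by rewrite lt_neqAle eq_sym s_neq.
have k_lt0 : (1 - 2 * s) / (4 * s) < 0 by rewrite pmulr_llt0 ?invr_gt0; lra.
exists (Num.min 1 (expR (ln T / ((1 - 2 * s) / (4 * s))))).
  by rewrite lt_min ltr01 expR_gt0.
move=> e /andP[e0]; rewrite lt_min => /andP[e1 e_lt]; split => //.
have : ln e < ln T / ((1 - 2 * s) / (4 * s)).
  by rewrite -[ltRHS]expRK ltr_ln ?posrE ?expR_gt0.
rewrite -(ltr_nM2l k_lt0) mulrC divfK ?lt_eqF // => lnT_lt.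
by rewrite /powR gt_eqF // -[ltLHS]lnK ?posrE // ltr_expR.
Qed.

Lemma phi_ell_scaling s beta e x : 2^-1 <= s < 1 -> 0 < e < 1 -> 0 < x ->
  phi s beta e x =
  decay s (ell s e) * (phi_offset s beta (ell s e) + beta * growth s (x / ell s e)).
Proof.
move=> hs he x0; have L0 := ell_gt0 s he; have [e0 e1] := andP he.
rewrite /phi /phi_offset /growth (gtr0_norm x0) ln_div ?posrE //.
case: eqP => [s12|/eqP s12].
  (* [ell^2 = ln (1/e)], so [decay (ell) = 1 / ln (1/e)] *)
  have ellE : ln e^-1 = expR (ln (ell s e) *+ 2).
    rewrite -lnXn // lnK ?posrE ?exprn_gt0 // /ell s12 eqxx sqr_sqrtr //.
    exact/ltW/ln_inv_gt0.
  rewrite /decay ellE s12 -expRN.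
  have -> : - (1 + 2 * 2^-1) * ln (ell 2^-1 e) = - (ln (ell 2^-1 e) *+ 2) :> R.
    by rewrite mulr2n; field.
  ring.
have s0 : s != 0 by rewrite gt_eqF //; case/andP: hs; lra.
have lnL : ln (ell s e) = (1 - 2 * s) / (4 * s) * ln e.
  by rewrite /ell (negbTE s12) ln_powR.
rewrite add0r /decay /powR !gt_eqF // lnL -mulrA -expRD mulrCA -expRD.
by congr (_ * expR _); field.
Qed.

End LengthScale.

Lemma ground_state_bounds (R : realType) (s b : R) (U : R -> R) :
  ground_state_props s U b -> 0 <= s ->
  exists2 X0 : R, 1 <= X0 & forall x, X0 <= x -> b / 2 * decay s x <= U x <= 2 * b * decay s x.
Proof.
case=> _ _ _ b0 /cvgrPdist_lt /(_ (b / 2)) U_asymp s0.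
have [M [_ HM]] : \forall x \near +oo, `|b - U x * `|x| `^ (1 + 2 * s)| < b / 2.
  by apply: U_asymp; rewrite divr_gt0.
exists (Num.max 1 (M + 1)) => [|x]; first by rewrite le_max lexx.
rewrite ge_max => /andP[x1 xM]; have x0 : 0 < x by lra.
have /HM : M < x by lra.
have -> : `|x| `^ (1 + 2 * s) = (decay s x)^-1.
  by rewrite /decay (gtr0_norm x0) /powR gt_eqF // mulNr expRN invrK.
have P0 := decay_gt0 s x; rewrite ltr_norml => /andP[h1 h2].
have -> : U x = U x / decay s x * decay s x by rewrite divfK // gt_eqF.
by rewrite !ler_pM2r //; apply/andP; split; lra.
Qed.

Definition interaction (R : realType) (s alpha beta : R) (U : R -> R) (e x : R) : R :=
  alpha * U x + phi s beta e x.

Lemma interaction_normr (R : realType) (s alpha beta : R) (U : R -> R) (e x : R) :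
  (forall x, U (- x) = U x) ->
  interaction s alpha beta U e x = interaction s alpha beta U e `|x|.
Proof.
move=> U_even; rewrite /interaction /phi normr_id.
by case: (ler0P x) => hx; rewrite ?(ler0_norm hx) ?U_even.
Qed.

(* In units of [decay s ell], every summand of [Xi] is at least [phi_offset - floor_loss],
   a summand of the reference configuration is at most [phi_offset + ref_loss], and a
   summand whose argument is off the scale [ell] by the factor [eta] gains [off_scale_gain]. *)
Definition floor_loss (R : realType) (alpha beta b : R) : R := beta + beta ^+ 2 / (alpha * b).

Definition ref_loss (R : realType) (m : nat) (alpha beta b : R) : R :=
  2 * alpha * b + 2 * m%:R * beta.

Definition off_scale_gain (R : realType) (s alpha beta b eta : R) : R :=
  Num.min (alpha * b / (16 * eta ^+ 2)) (beta * growth_rate s * ln eta^-1).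

Lemma off_scale_gain_large (R : realType) (s alpha beta b T : R) :
  2^-1 <= s < 1 -> 0 < alpha -> 0 < beta -> 0 < b ->
  exists2 eta0 : R, 0 < eta0 &
    forall eta : R, 0 < eta < eta0 -> T < off_scale_gain s alpha beta b eta.
Proof.
move=> hs alpha0 beta0 b0; pose T' := `|T| + 1.
have T'0 : 0 < T' by rewrite ltr_pwDr.
have TT' : T < T' by apply: le_lt_trans (ler_norm T) _; rewrite ltrDl.
have ab0 : 0 < alpha * b by rewrite mulr_gt0.
set c := beta * growth_rate s; have c0 : 0 < c.
  by rewrite mulr_gt0 //; case/andP: (growth_rate_itv hs).
exists (Num.min 1 (Num.min (alpha * b / (16 * T')) (expR (- (T' / c))))).
  by rewrite !lt_min ltr01 expR_gt0 divr_gt0 ?mulr_gt0.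
move=> eta /andP[eta0]; rewrite /off_scale_gain !lt_min => /andP[eta1 /andP[eta_a eta_e]].
apply/andP; split; apply: lt_trans TT' _.
  rewrite ltr_pdivlMr ?mulr_gt0 ?exprn_gt0 //.
  by move: eta_a; rewrite ltr_pdivlMr ?mulr_gt0 //; nra.
have : ln eta < - (T' / c) by rewrite -[ltRHS]expRK ltr_ln ?posrE ?expR_gt0.
have : c * (T' / c) = T' by rewrite mulrC divfK ?gt_eqF.
rewrite lnV ?posrE // -/c; nra.
Qed.

Section InteractionBounds.
Variables (R : realType) (s alpha beta b : R) (U : R -> R) (X0 e : R).
Hypotheses (hs : 2^-1 <= s < 1) (alpha_gt0 : 0 < alpha) (beta_gt0 : 0 < beta)
  (b_gt0 : 0 < b) (X0_ge1 : 1 <= X0) (he : 0 < e < 1)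
  (U_bounds : forall x, X0 <= x -> b / 2 * decay s x <= U x <= 2 * b * decay s x).

Local Notation L := (ell s e).
Local Notation S := (decay s L).
Local Notation c0 := (phi_offset s beta L).
Local Notation f := (interaction s alpha beta U e).

Lemma interaction_scaled_bounds x : X0 <= x ->
  S * (c0 + alpha * b / 2 * decay s (x / L) + beta * growth s (x / L)) <= f x <=
  S * (c0 + 2 * alpha * b * decay s (x / L) + beta * growth s (x / L)).
Proof.
move=> xX; have x0 : 0 < x := lt_le_trans ltr01 (le_trans X0_ge1 xX).
have /andP[Ulo Uhi] := U_bounds xX.
rewrite (decay_div s x0 (ell_gt0 s he)) in Ulo Uhi.
rewrite /interaction (phi_ell_scaling beta hs he x0).
have h1 : alpha * (b / 2 * (S * decay s (x / L))) <= alpha * U x by rewrite ler_pM2l.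
have h2 : alpha * U x <= alpha * (2 * b * (S * decay s (x / L))) by rewrite ler_pM2l.
by apply/andP; split; nra.
Qed.

Lemma interaction_ge_decay x : X0 <= x ->
  S * (c0 + alpha * b / 4 * decay s (x / L) - floor_loss alpha beta b) <= f x.
Proof.
move=> xX; have x0 : 0 < x := lt_le_trans ltr01 (le_trans X0_ge1 xX).
have /andP[lo _] := interaction_scaled_bounds xX; apply: le_trans lo.
have a0 : 0 < alpha * b / 4 by rewrite divr_gt0 ?mulr_gt0.
have := decay_growth_ge hs a0 beta_gt0 (divr_gt0 x0 (ell_gt0 s he)).
rewrite ler_pM2l ?decay_gt0 // /floor_loss (_ : 4 * (alpha * b / 4) = alpha * b); last by field.
have : 0 <= alpha * b / 4 * decay s (x / L) by rewrite mulr_ge0 ?ltW ?decay_gt0.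
nra.
Qed.

Lemma interaction_ge_floor x : X0 <= x -> S * (c0 - floor_loss alpha beta b) <= f x.
Proof.
move=> xX; apply: le_trans (interaction_ge_decay xX).
rewrite ler_pM2l ?decay_gt0 // lerD2r lerDl.
by rewrite mulr_ge0 ?divr_ge0 ?mulr_ge0 ?ltW ?decay_gt0.
Qed.

Lemma interaction_ge_ln x : X0 <= x ->
  S * (c0 + beta * growth_rate s * ln (x / L)) <= f x.
Proof.
move=> xX; have x0 : 0 < x := lt_le_trans ltr01 (le_trans X0_ge1 xX).
have /andP[lo _] := interaction_scaled_bounds xX; apply: le_trans lo.
have : beta * (growth_rate s * ln (x / L)) <= beta * growth s (x / L).
  by rewrite ler_pM2l // growth_ge_ln // divr_gt0 ?ell_gt0.
have : 0 <= alpha * b / 2 * decay s (x / L) by rewrite !mulr_ge0 ?ltW ?decay_gt0.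
move=> h1 h2; rewrite ler_pM2l ?decay_gt0 // -mulrA; lra.
Qed.

Lemma interaction_le_ref (m : nat) y : X0 <= y -> L <= y <= 2 * m%:R * L ->
  f y <= S * (c0 + ref_loss m alpha beta b).
Proof.
move=> yX /andP[Ly yL]; have /andP[_ hi] := interaction_scaled_bounds yX.
have L_gt0 := ell_gt0 s he.
apply: le_trans hi _; rewrite ler_pM2l ?decay_gt0 // /ref_loss.
have t1 : 1 <= y / L by rewrite ler_pdivlMr // mul1r.
have t2 : y / L <= 2 * m%:R by rewrite ler_pdivrMr.
have d1 : decay s (y / L) <= 1 by apply: decay_le1 => //; case/andP: hs; lra.
have : 2 * alpha * b * decay s (y / L) <= 2 * alpha * b.
  by rewrite -[leRHS]mulr1 ler_pM2l // !mulr_gt0.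
have : beta * growth s (y / L) <= beta * (2 * m%:R).
  by rewrite ler_pM2l // (le_trans (growth_le hs t1)).
lra.
Qed.

Lemma interaction_ge_off_scale (eta x : R) : 0 < eta <= 2^-1 -> X0 <= x ->
  x <= 2 * eta * L \/ eta^-1 * L <= x ->
  S * (c0 + off_scale_gain s alpha beta b eta - floor_loss alpha beta b) <= f x.
Proof.
move=> /andP[eta0 eta_le] xX; have x0 : 0 < x := lt_le_trans ltr01 (le_trans X0_ge1 xX).
have L_gt0 := ell_gt0 s he; have S_gt0 := decay_gt0 s L.
have t0 : 0 < x / L by rewrite divr_gt0.
case=> [x_small | x_large].
- apply: le_trans (interaction_ge_decay xX); rewrite ler_pM2l // lerD2r lerD2l.
  have t_le : x / L <= 2 * eta by rewrite ler_pdivrMr.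
  have t1 : 0 < x / L <= 1 by rewrite t0 /=; lra.
  have sq_le : (x / L) ^+ 2 <= 4 * eta ^+ 2 by nra.
  have sq0 : 0 < (x / L) ^+ 2 by rewrite exprn_gt0.
  have eta40 : 0 < 4 * eta ^+ 2 by rewrite mulr_gt0 ?exprn_gt0.
  have inv_le : (4 * eta ^+ 2)^-1 <= ((x / L) ^+ 2)^-1 by rewrite lef_pV2 ?posrE.
  have dec_ge := decay_ge_invsqr (proj1 (andP hs)) t1.
  have gain_le : off_scale_gain s alpha beta b eta <= alpha * b / 4 * (4 * eta ^+ 2)^-1.
    rewrite /off_scale_gain ge_min (_ : alpha * b / 4 * _ = alpha * b / (16 * eta ^+ 2)) ?lexx //.
    by field; rewrite gt_eqF.
  apply: le_trans gain_le _; rewrite ler_pM2l ?divr_gt0 ?mulr_gt0 //.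
  exact: le_trans inv_le dec_ge.
- apply: le_trans (interaction_ge_ln xX); rewrite ler_pM2l // -addrA lerD2l.
  have K0 : 0 <= floor_loss alpha beta b.
    by rewrite /floor_loss addr_ge0 ?divr_ge0 ?sqr_ge0 ?mulr_ge0 ?ltW.
  have : ln eta^-1 <= ln (x / L).
    by rewrite ler_ln ?posrE ?invr_gt0 // ler_pdivlMr // mulrC.
  have /andP[rate_gt0 _] := growth_rate_itv hs.
  have : off_scale_gain s alpha beta b eta <= beta * growth_rate s * ln eta^-1.
    by rewrite /off_scale_gain ge_min lexx orbT.
  have : 0 < beta * growth_rate s by rewrite mulr_gt0.
  nra.
Qed.

End InteractionBounds.

Section PairSums.
Variables (R : realDomainType) (m : nat).
Implicit Types (f : R -> R) (p q : 'rV[R]_m) (x y d E : R).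

Definition pair_sum f q : R :=
  \sum_(i < m) f (2 * q ord0 i)
  + \sum_(i < m) \sum_(j < m | j != i) f (q ord0 i - q ord0 j)
  + \sum_(i < m) \sum_(j < m | j != i) f (q ord0 i + q ord0 j).

Definition pair_arg q x : Prop :=
  (exists i, x = 2 * q ord0 i) \/
  exists i j, j != i /\ (x = q ord0 i - q ord0 j \/ x = q ord0 i + q ord0 j).

Lemma eq_pair_sum f g q :
  (forall x, pair_arg q x -> f x = g x) -> pair_sum f q = pair_sum g q.
Proof.
move=> fg; rewrite /pair_sum; congr (_ + _ + _); apply: eq_bigr => i _.
- by apply: fg; left; exists i.
- by apply: eq_bigr => j ji; apply: fg; right; exists i, j; split; [|left].
- by apply: eq_bigr => j ji; apply: fg; right; exists i, j; split; [|right].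
Qed.

Lemma sum_ge_floor (I : finType) (P : pred I) (F : I -> R) d :
  0 <= d -> (forall i, P i -> - d <= F i) -> - (d * #|I|%:R) <= \sum_(i | P i) F i.
Proof.
move=> d0 F_ge; rewrite big_mkcond /=.
apply: le_trans (_ : \sum_(i : I) - d <= _); first by rewrite sumr_const mulNrn mulr_natr.
by apply: ler_sum => i _; case: ifP => Pi; [exact: F_ge | rewrite oppr_le0].
Qed.

Lemma sum_ge_gap (I : finType) (P : pred I) (F : I -> R) d E :
  0 <= d -> (forall i, P i -> - d <= F i) -> (E <= 0 \/ exists2 i, P i & E <= F i) ->
  E - d * #|I|%:R <= \sum_(i | P i) F i.
Proof.
move=> d0 F_ge [E0|[i0 Pi0 Fi0]].
  by apply: le_trans (sum_ge_floor d0 F_ge); rewrite -[leRHS]add0r lerD2r.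
rewrite (bigD1 i0) //= lerD //.
by apply: sum_ge_floor => // i /andP[Pi _]; exact: F_ge.
Qed.

Lemma pair_sum_gap f p q d E x0 : 0 <= d ->
  (forall x y, pair_arg p x -> pair_arg q y -> - d <= f x - f y) ->
  pair_arg p x0 -> (forall y, pair_arg q y -> E <= f x0 - f y) ->
  E - d * (m%:R + 2 * m%:R ^+ 2) <= pair_sum f p - pair_sum f q.
Proof.
move=> d0 all_ge px0 gap.
set F1 := fun i : 'I_m => f (2 * p ord0 i) - f (2 * q ord0 i).
set F2 := fun ij : 'I_m * 'I_m =>
  f (p ord0 ij.1 - p ord0 ij.2) - f (q ord0 ij.1 - q ord0 ij.2).
set F3 := fun ij : 'I_m * 'I_m =>
  f (p ord0 ij.1 + p ord0 ij.2) - f (q ord0 ij.1 + q ord0 ij.2).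
set P2 := fun ij : 'I_m * 'I_m => ij.2 != ij.1.
have -> : pair_sum f p - pair_sum f q =
    \sum_i F1 i + \sum_(ij | P2 ij) F2 ij + \sum_(ij | P2 ij) F3 ij.
  rewrite /pair_sum !pair_big_dep /= !sumrB; lra.
have cards : #|'I_m|%:R = m%:R :> R /\ #|{: 'I_m * 'I_m}|%:R = m%:R ^+ 2 :> R.
  by rewrite card_prod card_ord natrM expr2.
have G1 E1 : E1 <= 0 \/ (exists2 i, true & E1 <= F1 i) -> E1 - d * m%:R <= \sum_i F1 i.
  rewrite -(proj1 cards); apply: sum_ge_gap => // i _.
  by apply: all_ge; left; exists i.
have G2 E2 : E2 <= 0 \/ (exists2 ij, P2 ij & E2 <= F2 ij) ->
    E2 - d * m%:R ^+ 2 <= \sum_(ij | P2 ij) F2 ij.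
  rewrite -(proj2 cards); apply: sum_ge_gap => // [[i j] ji].
  by apply: all_ge; right; exists i, j; split=> //; left.
have G3 E3 : E3 <= 0 \/ (exists2 ij, P2 ij & E3 <= F3 ij) ->
    E3 - d * m%:R ^+ 2 <= \sum_(ij | P2 ij) F3 ij.
  rewrite -(proj2 cards); apply: sum_ge_gap => // [[i j] ji].
  by apply: all_ge; right; exists i, j; split=> //; right.
have G1' := G1 0 (or_introl (lexx 0)).
have G2' := G2 0 (or_introl (lexx 0)); have G3' := G3 0 (or_introl (lexx 0)).
case: px0 gap => [[i ->] | [i [j [ji [-> | ->]]]]] gap.
- have hq : pair_arg q (2 * q ord0 i) by left; exists i.
  by have := G1 E (or_intror (ex_intro2 _ _ i isT (gap _ hq))); lra.
- have hq : pair_arg q (q ord0 i - q ord0 j) by right; exists i, j; split=> //; left.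
  by have := G2 E (or_intror (ex_intro2 _ _ (i, j) ji (gap _ hq))); lra.
- have hq : pair_arg q (q ord0 i + q ord0 j) by right; exists i, j; split=> //; right.
  by have := G3 E (or_intror (ex_intro2 _ _ (i, j) ji (gap _ hq))); lra.
Qed.

End PairSums.

Lemma pair_sum_continuous (R : realType) (m : nat) (f : R -> R) :
  continuous f -> continuous (pair_sum f : 'rV[R]_m -> R).
Proof.
move=> fc; pose coord i := fun q : 'rV[R]_m => q ord0 i.
have coordc i : continuous (coord i) by exact: coord_continuous.
have fcomp (g : 'rV[R]_m -> R) : continuous g -> continuous (fun q => f (g q)).
  by move=> gc q; apply: continuous_comp (gc q) (fc _).
have sumc (I : finType) (P : pred I) (F : I -> 'rV[R]_m -> R) :
    (forall i, continuous (F i)) -> continuous (fun q => \sum_(i | P i) F i q).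
  by move=> Fc; apply: continuous_big => [|i _]; [exact: add_continuous | exact: Fc].
have c1 : continuous (fun q : 'rV[R]_m => \sum_(i < m) f (2 * q ord0 i)).
  apply: (sumc _ _ (fun i q => f (2 * q ord0 i))) => i.
  apply: (fcomp (fun q => 2 * q ord0 i)) => q.
  exact: (@cvgM _ _ (nbhs q) _ (fun=> 2) (coord i) _ _ (cvg_cst _) (coordc i q)).
have c2 : continuous (fun q : 'rV[R]_m =>
    \sum_(i < m) \sum_(j < m | j != i) f (q ord0 i - q ord0 j)).
  apply: (sumc _ _ (fun i q => \sum_(j < m | j != i) f (q ord0 i - q ord0 j))) => i.
  apply: (sumc _ _ (fun j q => f (q ord0 i - q ord0 j))) => j.
  apply: (fcomp (fun q => q ord0 i - q ord0 j)) => q.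
  exact: (@cvgB _ _ _ (nbhs q) _ (coord i) (coord j) _ _ (coordc i q) (coordc j q)).
have c3 : continuous (fun q : 'rV[R]_m =>
    \sum_(i < m) \sum_(j < m | j != i) f (q ord0 i + q ord0 j)).
  apply: (sumc _ _ (fun i q => \sum_(j < m | j != i) f (q ord0 i + q ord0 j))) => i.
  apply: (sumc _ _ (fun j q => f (q ord0 i + q ord0 j))) => j.
  apply: (fcomp (fun q => q ord0 i + q ord0 j)) => q.
  exact: (@cvgD _ _ _ (nbhs q) _ (coord i) (coord j) _ _ (coordc i q) (coordc j q)).
by move=> q; exact: cvgD (cvgD (c1 q) (c2 q)) (c3 q).
Qed.

Section ConfigurationSets.
Variables (R : realType) (m : nat) (s eta e : R).

Definition Qweak : set 'rV[R]_m :=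
  [set q | (forall i, eta * ell s e <= q ord0 i <= eta^-1 * ell s e) /\
           (forall i j, i != j -> eta * ell s e <= `|q ord0 i - q ord0 j|)].

Lemma Qset_sub_Qweak : Qset s eta e `<=` Qweak.
Proof.
move=> q [Q1 Q2]; split=> [i | i j ij]; last exact/ltW/Q2.
by case/andP: (Q1 i) => lo hi; rewrite !ltW.
Qed.

Lemma closed_Qweak : closed Qweak.
Proof.
have closed_fun_ge (g : 'rV[R]_m -> R) c : continuous g -> closed [set q | c <= g q].
  by move/continuous_closedP => gc; exact: gc _ (@closed_ge R c).
have closed_fun_le (g : 'rV[R]_m -> R) c : continuous g -> closed [set q | g q <= c].
  by move/continuous_closedP => gc; exact: gc _ (@closed_le R c).
have coordc i : continuous (fun q : 'rV[R]_m => q ord0 i) by exact: coord_continuous.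
move=> q cq; have in_closed (C : set 'rV[R]_m) : closed C -> Qweak `<=` C -> C q.
  by move=> cC QC; exact: cC _ (closureS QC cq).
split=> [i | i j ij].
  apply/andP; split.
  - by apply: in_closed (closed_fun_ge _ _ (coordc i)) _ => p [/(_ i)/andP[]].
  - by apply: in_closed (closed_fun_le _ _ (coordc i)) _ => p [/(_ i)/andP[]].
apply: in_closed (closed_fun_ge (fun q => `|q ord0 i - q ord0 j|) _ _) _ => [p|p [_]]; last exact.
apply: (@continuous_comp _ _ _ (fun q : 'rV[R]_m => q ord0 i - q ord0 j) Num.norm).
  exact: (@cvgB _ _ _ (nbhs p) _ _ _ _ _ (coordc i p) (coordc j p)).
exact: norm_continuous.
Qed.

Lemma closure_Qset_sub : closure (Qset s eta e) `<=` Qweak.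
Proof. by move=> q /(closureS Qset_sub_Qweak); exact: closed_Qweak. Qed.

Lemma compact_Qweak : 0 < eta -> 0 < e < 1 -> compact Qweak.
Proof.
move=> eta0 he; apply: bounded_closed_compact; last exact: closed_Qweak.
have L0 := ell_gt0 s he.
exists (eta^-1 * ell s e); split; first by rewrite num_real.
move=> M hM q [hq _]; rewrite /= [X in X <= _]mx_normrE.
apply: bigmax_le => [|[i1 i2] _] /=.
  by apply: ltW; apply: lt_trans hM; rewrite mulr_gt0 ?invr_gt0.
have /andP[lo hi] := hq i2; rewrite (ord1 i1) ger0_norm.
  exact/ltW/(le_lt_trans hi).
by apply: le_trans lo; rewrite mulr_ge0 ?ltW.
Qed.

Lemma Qweak_pair_arg p x : 0 < eta -> 0 < e < 1 -> Qweak p -> pair_arg p x ->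
  eta * ell s e <= `|x|.
Proof.
move=> eta0 he [Q1 Q2]; have d0 : 0 <= eta * ell s e by rewrite mulr_ge0 ?ltW ?ell_gt0.
have lo i : eta * ell s e <= p ord0 i by case/andP: (Q1 i).
case=> [[i ->] | [i [j [ji [-> | ->]]]]].
- by have h := lo i; rewrite ger0_norm; lra.
- by apply: Q2; rewrite eq_sym.
- by have hi := lo i; have hj := lo j; rewrite ger0_norm; lra.
Qed.

Lemma Qset_of_pair_arg p : 0 < eta -> 0 < e < 1 -> Qweak p ->
  (forall x, pair_arg p x -> 2 * eta * ell s e < `|x| < eta^-1 * ell s e) ->
  Qset s eta e p.
Proof.
move=> eta0 he [Q1 _] inside; have d0 : 0 <= eta * ell s e by rewrite mulr_ge0 ?ltW ?ell_gt0.
split=> [i | i j ij].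
  have /andP[lo _] := Q1 i.
  have /andP[x_lo x_hi] := inside _ (or_introl (ex_intro _ i erefl)).
  rewrite ger0_norm in x_lo x_hi; [apply/andP; split|..]; lra.
have ji : j != i by rewrite eq_sym.
have /andP[lo _] := inside _ (or_intror (ex_intro _ i (ex_intro _ j (conj ji (or_introl erefl))))).
lra.
Qed.

End ConfigurationSets.
Arguments Qweak {R} m s eta e.

Lemma natr_dist_ge1 (R : realDomainType) (a b : nat) : a != b -> 1 <= `|a%:R - b%:R : R|.
Proof.
have lt1 p q : (p < q)%N -> 1 <= q%:R - p%:R :> R.
  move=> pq; have : p.+1%:R <= q%:R :> R by rewrite ler_nat.
  by rewrite -addn1 natrD; lra.
by case: ltngtP => // h _; [rewrite distrC|]; exact: le_trans (lt1 _ _ h) (ler_norm _).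
Qed.

Definition ref_config (R : realDomainType) (m : nat) (L : R) : 'rV[R]_m :=
  \row_(i < m) (i.+1%:R * L).

Section ReferenceConfiguration.
Variables (R : realType) (m : nat).

Let ref_configE (L : R) i : ref_config m L ord0 i = i.+1%:R * L.
Proof. by rewrite mxE. Qed.

Let ref_index_bounds (i : 'I_m) : 1 <= (i.+1%:R : R) <= m%:R.
Proof. by rewrite ler1n ler_nat ltn_ord. Qed.

Lemma ref_config_pair_arg (L y : R) : 0 < L -> pair_arg (ref_config m L) y ->
  L <= `|y| <= 2 * m%:R * L.
Proof.
move=> L0; case=> [[i ->] | [i [j [ji [-> | ->]]]]]; rewrite !ref_configE.
- have /andP[i1 im] := ref_index_bounds i.
  by rewrite ger0_norm; [apply/andP; split; nra | nra].
- have /andP[i1 im] := ref_index_bounds i; have /andP[j1 jm] := ref_index_bounds j.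
  have d1 : 1 <= `|i.+1%:R - j.+1%:R : R| by apply: natr_dist_ge1; rewrite eqSS eq_sym.
  have dm : `|i.+1%:R - j.+1%:R : R| <= m%:R by rewrite ler_norml; lra.
  by rewrite -mulrBl normrM (gtr0_norm L0); apply/andP; split; nra.
- have /andP[i1 im] := ref_index_bounds i; have /andP[j1 jm] := ref_index_bounds j.
  by rewrite ger0_norm; [apply/andP; split; nra | nra].
Qed.

Lemma ref_config_Qweak (s eta e : R) : 0 < eta -> eta * (2 * m%:R) <= 1 -> 0 < e < 1 ->
  Qweak m s eta e (ref_config m (ell s e)).
Proof.
move=> eta0 eta_m he; have L0 := ell_gt0 s he.
split=> [i | i j ij]; rewrite !ref_configE.
  have /andP[i1 im] := ref_index_bounds i.
  rewrite !ler_pM2r //; apply/andP; split; first nra.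
  by rewrite -(ler_pM2l eta0) mulfV ?gt_eqF //; nra.
have /andP[i1 im] := ref_index_bounds i.
have d1 : 1 <= `|i.+1%:R - j.+1%:R : R| by apply: natr_dist_ge1; rewrite eqSS.
rewrite -mulrBl normrM (gtr0_norm L0) ler_pM2r //; nra.
Qed.

End ReferenceConfiguration.

Lemma Xi_pair_sum (R : realType) (m : nat) (s alpha beta : R) (U : R -> R) (e : R)
    (q : 'rV[R]_m) :
  Xi s alpha beta U e q = pair_sum (interaction s alpha beta U e) q.
Proof. by []. Qed.

Definition gap_threshold (R : realType) (m : nat) (alpha beta b : R) : R :=
  (floor_loss alpha beta b + ref_loss m alpha beta b) * (1 + (m%:R + 2 * m%:R ^+ 2)).

Section Minimizer.
Variables (R : realType) (s alpha beta b : R) (U : R -> R) (m : nat) (X0 eta e : R).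
Hypotheses (hs : 2^-1 <= s < 1) (alpha_gt0 : 0 < alpha) (beta_gt0 : 0 < beta)
  (b_gt0 : 0 < b) (U_cont : continuous U) (U_even : forall x, U (- x) = U x)
  (X0_ge1 : 1 <= X0)
  (U_bounds : forall x, X0 <= x -> b / 2 * decay s x <= U x <= 2 * b * decay s x)
  (m_gt0 : (0 < m)%N) (he : 0 < e < 1) (eta_gt0 : 0 < eta)
  (eta_m : eta * (2 * m%:R) <= 1) (X0_le : X0 <= eta * ell s e)
  (gain_gt : gap_threshold m alpha beta b < off_scale_gain s alpha beta b eta).

Local Notation L := (ell s e).
Local Notation S := (decay s L).
Local Notation c0 := (phi_offset s beta L).
Local Notation f := (interaction s alpha beta U e).
Local Notation q0 := (ref_config m L).
Local Notation Xi := (Xi s alpha beta U e).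
Local Notation K := (floor_loss alpha beta b).
Local Notation M0 := (ref_loss m alpha beta b).
Local Notation G := (off_scale_gain s alpha beta b eta).

Lemma eta_le_half : eta <= 2^-1.
Proof.
have : eta * 2 <= eta * (2 * m%:R) by rewrite ler_pM2l // ler_peMr // ler1n.
by have := eta_m; lra.
Qed.

Lemma X0_le_ell : X0 <= L.
Proof.
apply: le_trans X0_le _; rewrite ler_piMl ?ltW ?ell_gt0 //.
by have := eta_le_half; lra.
Qed.

Lemma interaction_ge_Qweak p y : Qweak m s eta e p -> pair_arg p y -> S * (c0 - K) <= f y.
Proof.
move=> Qp py; rewrite (interaction_normr _ _ _ _ _ U_even).
apply: (interaction_ge_floor (X0 := X0)) => //.
exact: le_trans X0_le (Qweak_pair_arg eta_gt0 he Qp py).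
Qed.

Lemma interaction_le_ref_config y : pair_arg q0 y -> f y <= S * (c0 + M0).
Proof.
move=> qy; have /andP[y_ge y_le] := ref_config_pair_arg (ell_gt0 s he) qy.
rewrite (interaction_normr _ _ _ _ _ U_even).
by apply: (interaction_le_ref (X0 := X0)) => //; [exact: le_trans X0_le_ell y_ge | rewrite y_ge].
Qed.

Lemma interaction_ge_off_scale_arg p x : Qweak m s eta e p -> pair_arg p x ->
  `|x| <= 2 * eta * L \/ eta^-1 * L <= `|x| -> S * (c0 + G - K) <= f x.
Proof.
move=> Qp px off; rewrite (interaction_normr _ _ _ _ _ U_even).
apply: (interaction_ge_off_scale (X0 := X0)) => //; first by rewrite eta_gt0 eta_le_half.
exact: le_trans X0_le (Qweak_pair_arg eta_gt0 he Qp px).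
Qed.

Lemma Xi_ref_lt p x : Qweak m s eta e p -> pair_arg p x ->
  `|x| <= 2 * eta * L \/ eta^-1 * L <= `|x| -> Xi q0 < Xi p.
Proof.
move=> Qp px off; have S_gt0 := decay_gt0 s L.
have KM0 : 0 <= K + M0.
  rewrite addr_ge0 // /floor_loss /ref_loss.
    by rewrite addr_ge0 ?divr_ge0 ?sqr_ge0 ?mulr_ge0 ?ltW.
  by rewrite addr_ge0 ?mulr_ge0 ?ler0n ?ltW.
have all_ge x' y : pair_arg p x' -> pair_arg q0 y -> - (S * (K + M0)) <= f x' - f y.
  move=> px' qy; have := interaction_ge_Qweak Qp px'.
  by have := interaction_le_ref_config qy; lra.
have gap y : pair_arg q0 y -> S * (G - K - M0) <= f x - f y.
  move=> qy; have := interaction_ge_off_scale_arg Qp px off.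
  by have := interaction_le_ref_config qy; lra.
have := pair_sum_gap (mulr_ge0 (ltW S_gt0) KM0) all_ge px gap.
have : 0 < S * (G - gap_threshold m alpha beta b) by rewrite mulr_gt0 // subr_gt0.
by rewrite /gap_threshold !Xi_pair_sum; lra.
Qed.

Lemma Xi_continuous_within : {within Qweak m s eta e, continuous Xi}.
Proof.
have L_gt0 := ell_gt0 s he; have d_gt0 : 0 < eta * L by rewrite mulr_gt0.
(* [ln |x|] makes [Xi] discontinuous where an argument vanishes; [g] is a continuous
   cut-off of its summand that agrees with it on all arguments of points of [Qweak]. *)
pose cut (x : R) := Num.max `|x| (eta * L).
pose g (x : R) := alpha * U x + S * (c0 + beta * growth s (cut x / L)).
have gc : continuous g.
  move=> x; rewrite /g /cut.
  apply: cvgD; first by apply: cvgM; [exact: cvg_cst | exact: U_cont].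
  apply: cvgM; first exact: cvg_cst.
  apply: cvgD; first exact: cvg_cst.
  apply: cvgM; first exact: cvg_cst.
  apply: (@continuous_comp _ _ _ (fun x => Num.max `|x| (eta * L) / L) (growth s)).
    apply: cvgM; last exact: cvg_cst.
    by apply: continuous_max; [exact: norm_continuous | exact: cvg_cst].
  by apply: growth_continuous; rewrite divr_gt0 // lt_max d_gt0 orbT.
apply: (@subspace_eq_continuous _ _ _ (pair_sum g)).
  move=> p /[!inE] Qp; apply: (@eq_pair_sum _ _ g (interaction s alpha beta U e)) => x px.
  have xd := Qweak_pair_arg eta_gt0 he Qp px.
  rewrite /g /cut (max_l xd) /interaction; congr (_ + _).
  by rewrite -(phi_ell_scaling beta hs he (lt_le_trans d_gt0 xd)) /phi normr_id.
exact/continuous_subspaceT/pair_sum_continuous.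
Qed.

Lemma Xi_min_in_Qset :
  exists2 q : 'rV[R]_m, Qset s eta e q & forall p, Qweak m s eta e p -> Xi q <= Xi p.
Proof.
have Q0 : Qweak m s eta e q0 := ref_config_Qweak s eta_gt0 eta_m he.
have [c /[!inE] Qc c_min] :=
  EVT_min_rV (ex_intro _ q0 Q0) (compact_Qweak (m := m) (s := s) eta_gt0 he) Xi_continuous_within.
exists c => [|p Qp]; last by apply: c_min; rewrite inE.
apply: Qset_of_pair_arg => // x cx; rewrite !ltNge; apply/andP; split; apply/negP => off.
  by have := Xi_ref_lt Qc cx (or_introl off); rewrite ltNge c_min // inE.
by have := Xi_ref_lt Qc cx (or_intror off); rewrite ltNge c_min // inE.
Qed.

End Minimizer.

Unset Implicit Arguments.

Theorem lemma8p1 (R : realType) (s : R) (m : nat) (alpha beta b : R) (U : R -> R) :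
  2^-1 <= s < 1 -> (1 <= m)%N -> 0 < alpha -> 0 < beta ->
  ground_state_props s U b ->
  exists2 eta0 : R, 0 < eta0 & forall eta : R, 0 < eta < eta0 ->
  exists2 eps0 : R, 0 < eps0 & forall eps : R, 0 < eps < eps0 ->
  exists q : 'rV[R]_m,
    [/\ closure (@Qset R m s eta eps) q,
        @Qset R m s eta eps q &
        forall p, closure (@Qset R m s eta eps) p ->
          @Xi R m s alpha beta U eps q <= @Xi R m s alpha beta U eps p].
Proof.
move=> hs m_gt0 alpha0 beta0 hU; have [U_cont U_even _ b0 _] := hU.
have [X0 X0_ge1 U_bounds] : exists2 X0 : R, 1 <= X0 &
    forall x, X0 <= x -> b / 2 * decay s x <= U x <= 2 * b * decay s x.
  by apply: ground_state_bounds => //; case/andP: hs => s_ge _; apply: le_trans s_ge.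
have [eta1 eta1_gt0 gain_large] :=
  off_scale_gain_large (gap_threshold m alpha beta b) hs alpha0 beta0 b0.
have m2_gt0 : 0 < 2 * m%:R :> R by rewrite mulr_gt0 // ltr0n.
exists (Num.min eta1 (2 * m%:R)^-1) => [|eta /andP[eta0]].
  by rewrite lt_min eta1_gt0 invr_gt0.
rewrite lt_min => /andP[eta_lt1 eta_ltm].
have [e0 e0_gt0 small_e] := ell_gt_near0 hs (divr_gt0 (lt_le_trans ltr01 X0_ge1) eta0).
exists e0 => // e he0; have [e_lt1 X0_lt] := small_e e he0.
have he : 0 < e < 1 by case/andP: he0 => -> _.
have [q Qq q_min] : exists2 q : 'rV[R]_m, Qset s eta e q &
    forall p, Qweak m s eta e p -> Xi s alpha beta U e q <= Xi s alpha beta U e p.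
  apply: (Xi_min_in_Qset (b := b) (X0 := X0)) => //.
  - by move: eta_ltm; rewrite -[_^-1]mul1r ltr_pdivlMr // => /ltW.
  - by move: X0_lt; rewrite ltr_pdivrMr // mulrC => /ltW.
  - by apply: gain_large; rewrite eta0.
exists q; split=> //; first exact: subset_closure.
by move=> p /closure_Qset_sub; exact: q_min.
Qed.
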